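(* Let $R\ge1$, $0\le m<2^R$, $\mu$ a partition of $m$, and $\lambda$ a $2^R$-parent of $\mu$ with affected hook-length $h=h^\lambda_\mu$. Then, modulo $2$, \[ \eta^\lambda_\mu\equiv N_\lambda(h)-\mathbb{I}_{H(\lambda)}(h-2^{R-1})+\mathbb{I}_{H(\lambda)}(h+2^{R-1})+\mathbb{I}_{H(\lambda)}(h-3\cdot2^{R-1}). \]
   Context: $\mathrm{Od}(N)=\pm1$ according as the odd part of $N\ge1$ is $\equiv1$ or $\equiv3\pmod4$. For a partition $\lambda=(\lambda_1\ge\dots\ge\lambda_k>0)$, $H(\lambda):=\{\lambda_i+k-i\}$; $X^{+r}:=\{x+r:x\in X\}\cup\{0,\dots,r-1\}$. A partition $\lambda$ of $2^R+m$ is a $2^R$-parent of $\mu\vdash m$ ($m<2^R$) if there is $h\in H(\lambda)$, $h\ge2^R$, $h-2^R\notin H(\lambda)$, with $(H(\lambda)\cup\{h-2^R\})\setminus\{h\}=H(\mu)^{+r}$ for some $r\ge0$ (i.e. $\mu$ is obtained by removing a $2^R$ rim hook); this unique $h$ is the affected hook-length $h^\lambda_\mu$. $\eta^\lambda_\mu\in\mathbb{Z}/2$ is defined by $(-1)^{\eta^\lambda_\mu}=\prod_{x\in H(\lambda),x\ne h}\mathrm{Od}(|h-x|)/\mathrm{Od}(|h-2^R-x|)$. $N_\lambda(h):=\#\{y\in H(\lambda):h-2^R<y<h\}$, and $\mathbb{I}_X(x)=1$ if $x\in X$, $0$ otherwise. *)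

From mathcomp Require Import all_boot all_order all_algebra.
Set Implicit Arguments. Unset Strict Implicit. Unset Printing Implicit Defensive.
Import Order.TTheory GRing.Theory Num.Theory.

Definition oddpart (N : nat) : nat := N %/ 2 ^ logn 2 N.

(* Od(N) = 1 if the odd part of N is 1 mod 4, -1 if it is 3 mod 4
   (only meaningful for N >= 1; the value at 0 is irrelevant). *)
Definition Od (N : nat) : rat := if oddpart N %% 4 == 1 then 1%R else (-1)%R.

Definition distn (a b : nat) : nat := (a - b) + (b - a).

Definition is_partition (lam : seq nat) (n : nat) : bool :=
  [&& sorted (fun a b => b <= a) lam, all (fun x => 0 < x) lam & sumn lam == n].

Definition H (lam : seq nat) : seq nat :=
  let k := size lam in [seq nth 0 lam i + (k - i.+1) | i <- iota 0 k].

Definition shiftb (X : seq nat) (r : nat) : seq nat :=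
  [seq x + r | x <- X] ++ iota 0 r.

Definition parent_with (R : nat) (lam mu : seq nat) (h : nat) : Prop :=
  [/\ h \in H lam, 2 ^ R <= h, (h - 2 ^ R) \notin H lam &
   exists r : nat, (h - 2 ^ R) :: [seq x <- H lam | x != h] =i shiftb (H mu) r].

(* the sign (-1)^{eta^lam_mu} *)
Definition eta_sign (R : nat) (lam : seq nat) (h : nat) : rat :=
  \prod_(x <- H lam | x != h) (Od (distn h x) / Od (distn (h - 2 ^ R) x))%R.

Definition Nlam (R : nat) (lam : seq nat) (h : nat) : nat :=
  count (fun y => (h - 2 ^ R < y) && (y < h)) (H lam).

Definition Ind (X : seq nat) (z : int) : int :=
  match z with Posz n => Posz (n \in X : nat) | Negz _ => Posz 0 end.

From mathcomp Require Import all_boot all_order all_algebra zify.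
Import Order.TTheory GRing.Theory Num.Theory.

(* Write R + 1 for the theorem's R and q = 2^R.  For a hook-length x <> h,
   the numbers |h - x| and |h - 2q - x| are a and a + 2q, or a and 2q - a,
   with 0 < a < 2q, because all hook-lengths are below 4q (they are at most
   |lam| = 2q + m).  Halving reduces Od a * Od (a +- 2q) to odd a, where
   residues mod 4 show that it is -1 exactly when a = q in the first case and
   a <> q in the second.  So x flips the sign exactly when h - 2q < x < h, or
   x is h - q, h + q or h - 3q; counting these x gives the formula. *)

Lemma oddpart_odd n : odd n -> oddpart n = n.
Proof. by move=> n_odd; rewrite /oddpart logn_coprime ?expn0 ?divn1 ?coprime2n. Qed.

Lemma oddpart_double n : 0 < n -> oddpart (2 * n) = oddpart n.
Proof. by move=> n_gt0; rewrite /oddpart lognM // logn_prime // expnD divnMl. Qed.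

Lemma OdV n : (Od n)^-1%R = Od n.
Proof. by rewrite /Od; case: ifP; rewrite ?invr1 ?invrN1. Qed.

Lemma Od_sqr n : (Od n * Od n)%R = 1%R.
Proof. by rewrite /Od; case: ifP; rewrite ?mulrNN mulr1. Qed.

Lemma Od_double n : 0 < n -> Od (2 * n) = Od n.
Proof. by move=> n_gt0; rewrite /Od oddpart_double. Qed.

Lemma Od_oddE n : odd n -> Od n = if n %% 4 == 1 then 1%R else (-1)%R.
Proof. by move=> n_odd; rewrite /Od oddpart_odd. Qed.

Lemma Od_addn4 n k : odd n -> Od (n + 4 * k) = Od n.
Proof.
move=> n_odd; have nk_odd : odd (n + 4 * k) by rewrite oddD oddM n_odd.
by rewrite !Od_oddE // -modnDm modnMr addn0 modn_mod.
Qed.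

Lemma Od_subn4 n k : odd n -> n < 4 * k -> Od (4 * k - n) = (- Od n)%R.
Proof.
move=> n_odd n_lt.
have kn_odd : odd (4 * k - n) by rewrite oddB ?(ltnW n_lt) // oddM n_odd.
rewrite !Od_oddE //.
have [n1 | n3] : n %% 4 = 1 \/ n %% 4 = 3 by have := modn2 n; rewrite n_odd; lia.
  have -> : (4 * k - n) %% 4 = 3 by lia.
  by rewrite n1.
have -> : (4 * k - n) %% 4 = 1 by lia.
by rewrite n3 opprK.
Qed.

Lemma mul_Od_addn_exp R a : 0 < a < 2 ^ R.+1 ->
  (Od a * Od (a + 2 ^ R.+1))%R = if a == 2 ^ R then (-1)%R else 1%R.
Proof.
elim: R a => [|R IH] a a_bnd.
  have -> : a = 1 by move: a_bnd; rewrite expn1; lia.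
  by rewrite /Od /oddpart /= mul1r.
have [a_odd | a_even] := boolP (odd a).
  have -> : (a == 2 ^ R.+1) = false by apply: contraTF a_odd => /eqP->; rewrite oddX.
  by rewrite [2 ^ R.+2]expnS [2 ^ R.+1]expnS mulnA Od_addn4 // Od_sqr.
move: a_bnd; have [b ->] : exists b, a = 2 * b by exists a./2; rewrite mul2n even_halfK.
move=> a_bnd; have b_bnd : 0 < b < 2 ^ R.+1 by move: a_bnd; rewrite expnS; lia.
have /andP[b_gt0 _] := b_bnd.
have -> : 2 * b + 2 ^ R.+2 = 2 * (b + 2 ^ R.+1) by rewrite expnS mulnDr.
by rewrite !Od_double ?addn_gt0 ?b_gt0 // IH // [2 ^ R.+1]expnS eqn_mul2l.
Qed.

Lemma mul_Od_subn_exp R a : 0 < a < 2 ^ R.+1 ->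
  (Od a * Od (2 ^ R.+1 - a))%R = if a == 2 ^ R then 1%R else (-1)%R.
Proof.
elim: R a => [|R IH] a a_bnd.
  have -> : a = 1 by move: a_bnd; rewrite expn1; lia.
  by rewrite /Od /oddpart /= mul1r.
have [a_odd | a_even] := boolP (odd a).
  have -> : (a == 2 ^ R.+1) = false by apply: contraTF a_odd => /eqP->; rewrite oddX.
  move: a_bnd; rewrite [2 ^ R.+2]expnS [2 ^ R.+1]expnS mulnA => /andP[_ a_lt].
  by rewrite Od_subn4 // mulrN Od_sqr.
move: a_bnd; have [b ->] : exists b, a = 2 * b by exists a./2; rewrite mul2n even_halfK.
move=> a_bnd; have b_bnd : 0 < b < 2 ^ R.+1 by move: a_bnd; rewrite expnS; lia.
have /andP[b_gt0 b_lt] := b_bnd.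
have -> : 2 ^ R.+2 - 2 * b = 2 * (2 ^ R.+1 - b) by rewrite expnS mulnBr.
by rewrite !Od_double ?subn_gt0 ?b_gt0 ?b_lt // IH // [2 ^ R.+1]expnS eqn_mul2l.
Qed.

Definition eta_exponent (R h x : nat) : nat :=
  [&& h - 2 ^ R.+1 < x & x < h] + (x + 2 ^ R == h) + (x == h + 2 ^ R)
  + (x + 3 * 2 ^ R == h).

Lemma Od_distn_ratio R h x :
  2 ^ R.+1 <= h < 2 ^ R.+2 -> x < 2 ^ R.+2 -> x != h -> x != h - 2 ^ R.+1 ->
  (Od (distn h x) / Od (distn (h - 2 ^ R.+1) x))%R = ((-1) ^+ eta_exponent R h x)%R.
Proof.
move=> h_bnd x_bnd /eqP x_neq_h /eqP x_neq_h'; rewrite OdV /distn.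
have exp_R1 : 2 ^ R.+1 = 2 * 2 ^ R by rewrite expnS.
have exp_R2 : 2 ^ R.+2 = 4 * 2 ^ R by rewrite !expnS mulnA.
have q_gt0 : 0 < 2 ^ R by rewrite expn_gt0.
have [x_lo | x_ge] := ltnP x (h - 2 ^ R.+1).
  set a := h - 2 ^ R.+1 - x.
  have -> : h - x + (x - h) = a + 2 ^ R.+1 by lia.
  have -> : h - 2 ^ R.+1 - x + (x - (h - 2 ^ R.+1)) = a by lia.
  have -> : eta_exponent R h x = (a == 2 ^ R) by rewrite /eta_exponent; lia.
  by rewrite mulrC mul_Od_addn_exp; [case: eqP | lia].
have [x_lt | x_gt] := ltnP x h.
  set a := h - x.
  have -> : h - x + (x - h) = a by lia.
  have -> : h - 2 ^ R.+1 - x + (x - (h - 2 ^ R.+1)) = 2 ^ R.+1 - a by lia.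
  have -> : eta_exponent R h x = 1 + (a == 2 ^ R) by rewrite /eta_exponent; lia.
  by rewrite mul_Od_subn_exp; [case: eqP | lia].
set a := x - h.
have -> : h - x + (x - h) = a by lia.
have -> : h - 2 ^ R.+1 - x + (x - (h - 2 ^ R.+1)) = a + 2 ^ R.+1 by lia.
have -> : eta_exponent R h x = (a == 2 ^ R) by rewrite /eta_exponent; lia.
by rewrite mul_Od_addn_exp; [case: eqP | lia].
Qed.

Lemma eta_exponent_self R h : eta_exponent R h h = 0.
Proof. by have := expn_gt0 2 R; rewrite /eta_exponent; lia. Qed.

Lemma sum_count (T : Type) (s : seq T) (P : pred T) : \sum_(x <- s) P x = count P s.
Proof. by rewrite -sumn_count sumnE big_map. Qed.

Lemma count_addn_eq (s : seq nat) d h :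
  uniq s -> count (fun x => x + d == h) s = (d <= h) && (h - d \in s).
Proof.
move=> s_uniq; case: leqP => [d_le | d_gt].
  by rewrite -count_uniq_mem //; apply: eq_count => x /=; lia.
by apply/eqP; rewrite -leqn0 leqNgt -has_count; apply/hasPn => x _ /=; lia.
Qed.

Lemma sum_eta_exponent R h (s : seq nat) : uniq s ->
  \sum_(x <- s) eta_exponent R h x =
  count (fun y => (h - 2 ^ R.+1 < y) && (y < h)) s + ((2 ^ R <= h) && (h - 2 ^ R \in s))
  + (h + 2 ^ R \in s) + ((3 * 2 ^ R <= h) && (h - 3 * 2 ^ R \in s)).
Proof.
by move=> s_uniq; rewrite !big_split !sum_count !count_addn_eq // count_uniq_mem.
Qed.

Lemma eta_signE R lam h :
  {in H lam, forall x, x < 2 ^ R.+2} -> h \in H lam -> 2 ^ R.+1 <= h ->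
  h - 2 ^ R.+1 \notin H lam ->
  eta_sign R.+1 lam h = ((-1) ^+ \sum_(x <- H lam) eta_exponent R h x)%R.
Proof.
move=> H_lt h_in h_ge h'_notin.
rewrite (big_morph (fun n => (-1) ^+ n)%R (exprD (-1)) (expr0 (-1))).
rewrite /eta_sign big_mkcond !big_seq; apply: eq_bigr => x x_in.
have [-> | x_neq_h] := eqP; first by rewrite eta_exponent_self.
rewrite Od_distn_ratio ?H_lt ?h_ge ?(H_lt h) //; first exact/eqP.
by apply: contraNneq h'_notin => <-.
Qed.

Lemma size_le_sumn (s : seq nat) : all (fun x => 0 < x) s -> size s <= sumn s.
Proof. by elim: s => //= x s IH /andP[x_gt0 /IH]; lia. Qed.

Lemma mem_H_le_sumn lam x : all (fun y => 0 < y) lam -> x \in H lam -> x <= sumn lam.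
Proof.
move=> lam_pos /mapP[i]; rewrite mem_iota add0n => /andP[_ i_lt] ->.
elim: lam i lam_pos i_lt {x} => // y lam IH [|i] /= /andP[y_gt0 lam_pos] i_lt.
  by have := size_le_sumn lam lam_pos; lia.
by have := IH i lam_pos i_lt; lia.
Qed.

Lemma uniq_H lam : sorted (fun a b => b <= a) lam -> uniq (H lam).
Proof.
move=> lam_sorted; rewrite map_inj_in_uniq ?iota_uniq // => i j.
rewrite !mem_iota !add0n => i_lt j_lt.
have nth_mono k l : k < size lam -> l < size lam -> k <= l -> nth 0 lam l <= nth 0 lam k.
  have geq_trans : transitive (fun a b : nat => b <= a).
    by move=> ? ? ? /[swap]; apply: leq_trans.
  by move=> k_lt l_lt; apply: (sorted_leq_nth geq_trans (fun a => leqnn a)).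
by have [ij | ij | //] := ltngtP i j; have := nth_mono _ _ _ _ (ltnW ij); lia.
Qed.

Local Open Scope ring_scope.

Lemma Ind_subn X (a b : nat) :
  Ind X (a%:Z - b%:Z) = ((b <= a)%N && (a - b \in X)%N : nat)%:Z.
Proof.
case: leqP => [b_le | a_lt]; first by rewrite subzn.
by have -> : a%:Z - b%:Z = Negz (b - a).-1 by rewrite NegzE; lia.
Qed.

Lemma signr_subz (R : unitRingType) (a b : nat) :
  (-1 : R) ^ (a%:Z - b%:Z) = (-1) ^+ (a + b)%N.
Proof.
case: (leqP b a) => [b_le | /ltnW a_le].
  by rewrite subzn // -[LHS]signr_odd -[RHS]signr_odd oddB // oddD.
rewrite -opprB subzn // -exprnN invr_sign.
by rewrite -[LHS]signr_odd -[RHS]signr_odd oddB // oddD addbC.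
Qed.

Theorem proposition3p5 (R m : nat) (mu lam : seq nat) (h : nat) :
  (1 <= R)%N -> (m < 2 ^ R)%N ->
  is_partition mu m -> is_partition lam (2 ^ R + m) ->
  parent_with R lam mu h ->
  eta_sign R lam h =
  (-1 : rat) ^ ((Nlam R lam h)%:Z
                 - Ind (H lam) (h%:Z - (2 ^ R.-1)%N%:Z)
                 + Ind (H lam) (h%:Z + (2 ^ R.-1)%N%:Z)
                 + Ind (H lam) (h%:Z - (3 * 2 ^ R.-1)%N%:Z)).
Proof.
case: R => [//|R] _ m_lt _ /and3P[lam_sorted lam_pos /eqP lam_sum] [h_in h_ge h'_notin _].
have H_lt : {in H lam, forall x, (x < 2 ^ R.+2)%N}.
  move=> x /(mem_H_le_sumn _ _ lam_pos); rewrite lam_sum [(2 ^ R.+2)%N]expnS; lia.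
rewrite /= eta_signE // sum_eta_exponent ?uniq_H // !Ind_subn -/(Nlam R.+1 lam h).
set N := Nlam _ _ _; set I1 := nat_of_bool _; set I2 := nat_of_bool _; set I3 := nat_of_bool _.
have -> : N%:Z - I1%:Z + I2%:Z + I3%:Z = (N + I2 + I3)%N%:Z - I1%:Z by lia.
by rewrite signr_subz; congr (_ ^+ _); lia.
Qed.
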